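(* A permutation group $G$ on a finite set $\Omega$ with $|\Omega|\ge 2$ has the ordered $2$-ut property if and only if $G$ is primitive.
   Context: $G$ has the ordered $k$-ut property if for every $k$-tuple $(a_1,\dots,a_k)$ of distinct points of $\Omega$ and every ordered partition $(P_1,\dots,P_k)$ of $\Omega$ into $k$ nonempty parts there is $g\in G$ with $a_ig\in P_i$ for all $i$. *)

From mathcomp Require Import all_boot all_fingroup all_solvable.
Set Implicit Arguments. Unset Strict Implicit. Unset Printing Implicit Defensive.

(* A permutation group on the finite set Omega = T is a group G of {perm T};
   a point x is sent by g to g x (= aperm x g). *)

Definition ordered_partition (T : finType) (k : nat) (P : 'I_k -> {set T}) :=
  (forall i, P i != set0) /\
  (forall i j, i != j -> [disjoint P i & P j]) /\
  (forall x : T, exists i, x \in P i).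

Definition ordered_ut (T : finType) (k : nat) (G : {group {perm T}}) :=
  forall (a : 'I_k -> T), injective a ->
  forall (P : 'I_k -> {set T}), ordered_partition P ->
  exists2 g, g \in G & forall i, g (a i) \in P i.

(* Say g separates (x, y) from B when g x \in B and g y \notin B; ordered
   2-ut means every pair of distinct points is separated from every proper
   nonempty subset.  A block B of a nontrivial G-invariant partition that
   contains x and y is never separated from them: g x \in B forces g B = B.
   Conversely, in a transitive group the sets movers x B = {g in G | g x \in B}
   all have the same size, so if no g separates (x, y) from B then
   movers x B = movers y B.  The fibres of u |-> movers u B then form a
   G-invariant partition, nontrivial because it identifies x with y and splits
   B from its complement. *)
From mathcomp Require Import all_boot all_fingroup all_solvable.
Set Implicit Arguments. Unset Strict Implicit. Unset Printing Implicit Defensive.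
Local Open Scope group_scope.

Section OrderedPartitionTwo.
Variable T : finType.

Lemma ord2_cases (i : 'I_2) : i = ord0 \/ i = ord_max.
Proof. by case: i => [[|[|]]] // ?; [left | right]; apply: val_inj. Qed.

Lemma ordered_partition2_compl (P : 'I_2 -> {set T}) :
  ordered_partition P -> P ord_max = ~: P ord0.
Proof.
case=> _ [disjP covP]; apply/setP=> z; rewrite inE; apply/idP/idP => Pz.
  by rewrite (disjointFr (disjP ord_max ord0 isT) Pz).
have [i Piz] := covP z.
by case: (ord2_cases i) Piz => ->; first rewrite (negPf Pz).
Qed.

Lemma ordered_partition2 (B : {set T}) :
  B != set0 -> ~: B != set0 -> ordered_partition (tnth [tuple B; ~: B]).
Proof.
move=> B0 CB0; split; last split.
- by move=> i; case: (ord2_cases i) => ->.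
- move=> i j; case: (ord2_cases i) => ->; case: (ord2_cases j) => -> //= _.
    by rewrite disjoints_subset setCK.
  by rewrite disjoint_sym disjoints_subset setCK.
- by move=> z; case: (boolP (z \in B)) => Bz; [exists ord0 | exists ord_max];
    rewrite //= inE Bz.
Qed.

End OrderedPartitionTwo.

Section PartitionCounting.
Variable T : finType.
Implicit Types (Q : {set {set T}}) (S B : {set T}).

Lemma partition_big_block Q S :
  partition Q S -> #|Q| < #|S| -> [exists B in Q, 1 < #|B|].
Proof.
move=> partQ; apply: contraLR => /exists_inPn small.
rewrite -leqNgt (card_partition partQ) -sum1_card.
by apply: leq_sum => B /small; rewrite -leqNgt.
Qed.

Lemma partition_block_proper Q S B :
  partition Q S -> 1 < #|Q| -> B \in Q -> B \proper S.
Proof.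
move=> partQ /card_gt1P[C [D [QC QD CD]]] QB.
rewrite properEneq (partitionS partQ QB) andbT.
have [E QE EB] : exists2 E, E \in Q & E != B.
  by case: (eqVneq C B) => [CB|]; [exists D; rewrite // -CB eq_sym | exists C].
apply: contraNneq EB => BS; have trivQ := partition_trivIset partQ.
have /set0Pn[z Ez] := partition_neq0 partQ QE.
have Bz : z \in B by rewrite BS (subsetP (partitionS partQ QE)).
by rewrite -(def_pblock trivQ QE Ez) (def_pblock trivQ QB Bz).
Qed.

Variables (rT : eqType) (f : T -> rT) (D : {set T}).

Lemma card_preim_partition_gt1 x y :
  x \in D -> y \in D -> f x != f y -> 1 < #|preim_partition f D|.
Proof.
move=> Dx Dy fxy; apply/card_gt1P.
exists [set z in D | f x == f z], [set z in D | f y == f z].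
split; [exact: imset_f | exact: imset_f |].
by apply: contraNneq fxy => /setP/(_ y); rewrite !inE Dy !eqxx /= => ->.
Qed.

Lemma card_preim_partition_lt x y :
  x \in D -> y \in D -> x != y -> f x = f y -> #|preim_partition f D| < #|D|.
Proof.
move=> Dx Dy xy fxy; rewrite ltn_neqAle leq_imset_card andbT.
apply: contraNneq xy => /eqP/imset_injP inj.
by apply/eqP/inj => //; apply/setP => z; rewrite !inE fxy.
Qed.

End PartitionCounting.

Section Separation.
Variables (T : finType) (G : {group {perm T}}).

Definition separates (x y : T) (B : {set T}) :=
  [exists g in G, (g x \in B) && (g y \notin B)].

Definition separating :=
  forall x y B, x != y -> B != set0 -> ~: B != set0 -> separates x y B.

Lemma ordered_ut2_separating : ordered_ut 2 G <-> separating.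
Proof.
split=> [ut x y B xy B0 CB0 | sepG a inj_a P partP].
  have [|g Gg sepg] := ut (tnth [tuple x; y]) _ _ (ordered_partition2 B0 CB0).
    by apply/tuple_uniqP; rewrite /= inE andbT.
  by apply/exists_inP; exists g; rewrite // (sepg ord0) -in_setC (sepg ord_max).
have a01 : a ord0 != a ord_max by apply/eqP => /inj_a.
have [P0 CP0] : P ord0 != set0 /\ ~: P ord0 != set0.
  by rewrite -(ordered_partition2_compl partP); have [nzP _] := partP.
have /exists_inP[g Gg /andP[gx gy]] := sepG _ _ _ a01 P0 CP0.
exists g => // i; case: (ord2_cases i) => -> //.
by rewrite (ordered_partition2_compl partP) inE.
Qed.

Lemma separating_transitive :
  0 < #|T| -> separating -> [transitive G, on [set: T] | 'P].
Proof.
case/card_gt0P=> x0 _ sepG; apply/imsetP; exists x0 => //.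
apply/setP=> y; rewrite inE; apply/esym/orbitP.
have [-> | x0y] := eqVneq x0 y; first by exists 1; rewrite ?group1 ?act1.
have /exists_inP[g Gg /andP[/set1P gx _]] : separates x0 y [set y].
  by apply: sepG => //; apply/set0Pn; [exists y | exists x0]; rewrite !inE // eq_sym.
by exists g.
Qed.

Lemma block_act_stable (Q : {set {set T}}) B x y g :
    trivIset Q -> [acts G, on Q | 'P^*] -> B \in Q -> x \in B -> y \in B ->
  g \in G -> g x \in B -> g y \in B.
Proof.
move=> trivQ actsQ QB Bx By Gg gxB.
have gBx : g x \in ('P^* B g)%act by apply: (mem_setact 'P).
have QgB : ('P^* B g)%act \in Q by rewrite (actsP actsQ g Gg).
have gB : ('P^* B g)%act = B.
  by rewrite -(def_pblock trivQ QgB gBx) (def_pblock trivQ QB gxB).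
by rewrite -gB (mem_setact 'P).
Qed.

Lemma separating_primitive :
  1 < #|T| -> separating -> [primitive G, on [set: T] | 'P].
Proof.
move=> T_gt1 sepG; rewrite /primitive separating_transitive ?(ltnW T_gt1) //=.
apply/existsPn => Q; apply/and3P => -[partQ actsQ /andP[Q_gt1 Q_ltT]].
have /exists_inP[B QB /card_gt1P[x [y [Bx By xy]]]] :=
  partition_big_block partQ Q_ltT.
have /properP[_ [z _ Bz]] := partition_block_proper partQ Q_gt1 QB.
have /exists_inP[g Gg /andP[gx /negP[]]] : separates x y B.
  by apply: sepG => //; apply/set0Pn; [exists x | exists z; rewrite inE].
exact: block_act_stable (partition_trivIset partQ) actsQ QB Bx By Gg gx.
Qed.

Definition movers x (B : {set T}) := [set g in G | g x \in B].

Lemma movers_act h x B : h \in G -> movers (h x) B = h^-1 *: movers x B.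
Proof.
by move=> Gh; apply/setP => g; rewrite mem_lcoset invgK !inE groupMl // permM.
Qed.

Lemma eq_movers_act h u v B :
  h \in G -> (movers (h u) B == movers (h v) B) = (movers u B == movers v B).
Proof. by move=> Gh; rewrite !movers_act // (inj_eq (@lcoset_inj _ _)). Qed.

Lemma card_movers x y B :
  [transitive G, on [set: T] | 'P] -> #|movers x B| = #|movers y B|.
Proof.
move=> trG; have [h Gh ->] := atransP2 trG (in_setT x) (in_setT y).
by rewrite /= movers_act // card_lcoset.
Qed.

Lemma unseparated_movers x y B :
  [transitive G, on [set: T] | 'P] -> ~~ separates x y B ->
  movers x B = movers y B.
Proof.
move=> trG /exists_inPn nsep; apply/eqP.
rewrite eqEcard (card_movers y x B trG) leqnn andbT.
apply/subsetP => g; rewrite !inE => /andP[Gg gx]; rewrite Gg /=.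
by have := nsep g Gg; rewrite gx /= negbK.
Qed.

Lemma acts_preim_partition (rT : eqType) (f : T -> rT) :
    {in G, forall (g : {perm T}) u v, (f (g u) == f (g v)) = (f u == f v)} ->
  [acts G, on preim_partition f [set: T] | 'P^*].
Proof.
move=> f_inv; apply/subsetP => g Gg; rewrite !inE.
apply/subsetP => _ /imsetP[u _ ->]; rewrite inE /=.
apply/imsetP; exists (g u) => //; apply/setP => v.
by rewrite -{1}[g]invgK setactVin ?inE //= -(f_inv g Gg) apermE permKV.
Qed.

Lemma primitive_separating :
  [primitive G, on [set: T] | 'P] -> separating.
Proof.
case/andP=> trG /existsPn noSys x y B xy B0 CB0.
apply: contraT => /(unseparated_movers trG) eq_movers_xy.
have [[u Bu] [v]] := (set0Pn _ B0, set0Pn _ CB0); rewrite inE => Bv.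
have neq_movers_uv : movers u B != movers v B.
  by apply: contraNneq Bv => /setP/(_ 1); rewrite !inE group1 !perm1 Bu.
case/negP: (noSys (preim_partition (movers^~ B) [set: T])).
apply/and3P; split; first exact: preim_partitionP.
  by apply: acts_preim_partition => g Gg u' v'; apply: eq_movers_act.
rewrite (card_preim_partition_gt1 (in_setT u) (in_setT v)) //=.
exact: card_preim_partition_lt (in_setT x) (in_setT y) xy eq_movers_xy.
Qed.

End Separation.

Theorem proposition2p2 (T : finType) (G : {group {perm T}}) :
  1 < #|T| ->
  (ordered_ut 2 G <-> [primitive G, on [set: T] | 'P]).
Proof.
move=> T_gt1; apply: iff_trans (ordered_ut2_separating G) _.
by split; [exact: separating_primitive | exact: primitive_separating].
Qed.
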